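(* Let $\mathcal{I}\in\mathrm{Ins}(\Omega,\mathcal{H},\mathcal{K})$ and $\mathcal{J}\in\mathrm{Ins}(\Lambda,\mathcal{H},\mathcal{V})$ be instruments and let $\mathcal{I}^C\in\mathrm{Ins}(\Omega,\mathcal{H},\mathcal{H}_A)$ be the complementary instrument of $\mathcal{I}$ relative to any dilation $(\mathcal{H}_A,W,\mathsf{E})$ of $\mathcal{I}$. Then $\mathcal{I}$ and $\mathcal{J}$ are compatible if and only if $\mathcal{J}\preceq\mathcal{I}^C$.
   Context: All Hilbert spaces are finite-dimensional and complex, and all outcome sets are finite. A POVM $\mathsf{E}\in\mathcal{O}(\Omega,\mathcal{H})$ is a map $x\mapsto \mathsf{E}(x)$ from $\Omega$ to positive operators with $\sum_x\mathsf{E}(x)=I$. An instrument $\mathcal{I}\in\mathrm{Ins}(\Omega,\mathcal{H},\mathcal{K})$ is a family $(\mathcal{I}_x)_{x\in\Omega}$ of completely positive trace-nonincreasing linear maps $\mathcal{L}(\mathcal{H})\to\mathcal{L}(\mathcal{K})$ whose sum is trace preserving. A dilation of $\mathcal{I}$ is a triple $(\mathcal{H}_A,W,\mathsf{E})$ with $\mathcal{H}_A$ a Hilbert space, $W:\mathcal{H}\to\mathcal{H}_A\otimes\mathcal{K}$ an isometry and $\mathsf{E}\in\mathcal{O}(\Omega,\mathcal{H}_A)$, such that $\mathcal{I}_x(\varrho)=\mathrm{tr}_{\mathcal{H}_A}[W\varrho W^*(\mathsf{E}(x)\otimes I_{\mathcal{K}})]$ for all $x$ and states $\varrho$. The complementary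 instrument relative to this dilation is $\mathcal{I}^C\in\mathrm{Ins}(\Omega,\mathcal{H},\mathcal{H}_A)$, $\mathcal{I}^C_x(\varrho)=\mathrm{tr}_{\mathcal{K}}[(\sqrt{\mathsf{E}(x)}\otimes I_{\mathcal{K}})W\varrho W^*(\sqrt{\mathsf{E}(x)}\otimes I_{\mathcal{K}})]$. Postprocessing: for $\mathcal{J}\in\mathrm{Ins}(\Lambda,\mathcal{H},\mathcal{V})$ and $\mathcal{L}\in\mathrm{Ins}(\Gamma,\mathcal{H},\mathcal{W})$, $\mathcal{J}\preceq\mathcal{L}$ if there exist instruments $\mathcal{R}^{(z)}\in\mathrm{Ins}(\Lambda,\mathcal{W},\mathcal{V})$, $z\in\Gamma$, with $\mathcal{J}_y=\sum_z\mathcal{R}^{(z)}_y\circ\mathcal{L}_z$ for all $y$. Two instruments $\mathcal{I}\in\mathrm{Ins}(\Omega,\mathcal{H},\mathcal{K})$, $\mathcal{J}\in\mathrm{Ins}(\Lambda,\mathcal{H},\mathcal{V})$ are compatible if there is $\mathcal{G}\in\mathrm{Ins}(\Omega\times\Lambda,\mathcal{H},\mathcal{K}\otimes\mathcal{V})$ with $\sum_{x}\mathrm{tr}_{\mathcal{K}}[\mathcal{G}_{(x,y)}(\varrho)]=\mathcal{J}_y(\varrho)$ for all $y$ and $\sum_y\mathrm{tr}_{\mathcal{V}}[\mathcal{G}_{(x,y)}(\varrho)]=\mathcal{I}_x(\varrho)$ for all $x$, for all states $\varrho$. *)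

From HB Require Import structures.
From mathcomp Require Import all_boot all_order all_algebra.
From mathcomp Require Import sesquilinear spectral.
From mathcomp Require Import mxtens.
From Stdlib Require Import ClassicalEpsilon.
Set Implicit Arguments.
Unset Strict Implicit.
Unset Printing Implicit Defensive.
Import Order.TTheory GRing.Theory Num.Theory.
Local Open Scope ring_scope.
Local Open Scope sesquilinear_scope.

Section Quantum.
Variable C : numClosedFieldType.

Definition adj {m n} (A : 'M[C]_(m, n)) : 'M[C]_(n, m) := A ^t*.

Definition psd {n} (A : 'M[C]_n) : Prop :=
  forall v : 'cV[C]_n, 0 <= (adj v *m A *m v) 0 0.

Definition state {n} (rho : 'M[C]_n) : Prop := psd rho /\ \tr rho = 1.

(* the positive square root of a positive operator (unique, chosen by
   classical choice; meaningless on non-positive arguments) *)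
Definition sqrtm {n} (A : 'M[C]_n) : 'M[C]_n :=
  epsilon (inhabits 0) (fun B => psd B /\ B *m B = A).

Definition is_linear_map {n m} (Phi : 'M[C]_n -> 'M[C]_m) : Prop :=
  forall (c : C) (X Y : 'M[C]_n), Phi (c *: X + Y) = c *: Phi X + Phi Y.

(* (id_k (x) Phi) X, reference system first *)
Definition ampl {n m} (k : nat) (Phi : 'M[C]_n -> 'M[C]_m)
  (X : 'M[C]_(k * n)) : 'M[C]_(k * m) :=
  \matrix_(i, j)
    Phi (\matrix_(c, d) X (mxtens_index ((mxtens_unindex i).1, c))
                          (mxtens_index ((mxtens_unindex j).1, d)))
        (mxtens_unindex i).2 (mxtens_unindex j).2.

Definition completely_positive {n m} (Phi : 'M[C]_n -> 'M[C]_m) : Prop :=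
  forall (k : nat) (X : 'M[C]_(k * n)), psd X -> psd (ampl Phi X).

Definition trace_nonincreasing {n m} (Phi : 'M[C]_n -> 'M[C]_m) : Prop :=
  forall rho : 'M[C]_n, psd rho -> \tr (Phi rho) <= \tr rho.

Definition instrument {Omega : finType} {n m}
  (I : Omega -> 'M[C]_n -> 'M[C]_m) : Prop :=
  (forall x, is_linear_map (I x) /\ completely_positive (I x)
             /\ trace_nonincreasing (I x)) /\
  (forall X : 'M[C]_n, \tr (\sum_x I x X) = \tr X).

Definition povm {Omega : finType} {a} (E : Omega -> 'M[C]_a) : Prop :=
  (forall x, psd (E x)) /\ \sum_x E x = 1%:M.

Definition isometry {n k} (W : 'M[C]_(k, n)) : Prop := adj W *m W = 1%:M.

Definition ptr1 {a m} (M : 'M[C]_(a * m)) : 'M[C]_m :=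
  \matrix_(j, k) \sum_(i < a) M (mxtens_index (i, j)) (mxtens_index (i, k)).
Definition ptr2 {a m} (M : 'M[C]_(a * m)) : 'M[C]_a :=
  \matrix_(i, l) \sum_(j < m) M (mxtens_index (i, j)) (mxtens_index (l, j)).

Definition dilation {Omega : finType} {n m a}
  (I : Omega -> 'M[C]_n -> 'M[C]_m)
  (W : 'M[C]_(a * m, n)) (E : Omega -> 'M[C]_a) : Prop :=
  isometry W /\ povm E /\
  forall x (rho : 'M[C]_n), state rho ->
    I x rho = ptr1 (W *m rho *m adj W *m (E x *t (1%:M : 'M[C]_m))).

Definition complementary {Omega : finType} {n m a}
  (W : 'M[C]_(a * m, n)) (E : Omega -> 'M[C]_a) (x : Omega)
  (rho : 'M[C]_n) : 'M[C]_a :=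
  ptr2 ((sqrtm (E x) *t (1%:M : 'M[C]_m)) *m W *m rho *m adj W
        *m (sqrtm (E x) *t (1%:M : 'M[C]_m))).

Definition postprocessing {Lambda Gamma : finType} {n p w}
  (J : Lambda -> 'M[C]_n -> 'M[C]_p) (L : Gamma -> 'M[C]_n -> 'M[C]_w)
  : Prop :=
  exists R : Gamma -> Lambda -> 'M[C]_w -> 'M[C]_p,
    (forall z, instrument (R z)) /\
    forall y (X : 'M[C]_n), J y X = \sum_z R z y (L z X).

Definition compatible {Omega Lambda : finType} {n m p}
  (I : Omega -> 'M[C]_n -> 'M[C]_m) (J : Lambda -> 'M[C]_n -> 'M[C]_p)
  : Prop :=
  exists G : Omega * Lambda -> 'M[C]_n -> 'M[C]_(m * p),
    instrument G /\
    (forall y (rho : 'M[C]_n), state rho ->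
       \sum_x ptr1 (G (x, y) rho) = J y rho) /\
    (forall x (rho : 'M[C]_n), state rho ->
       \sum_y ptr2 (G (x, y) rho) = I x rho).

End Quantum.

(* Put V x := (sqrtm (E x) *t 1) W. Then I x and the complementary instrument
   are the two partial traces of V x rho adj (V x), and the slices of V x along
   the first tensor factor are Kraus operators of I x.
   If J is a postprocessing of the complementary instrument by instruments with
   Kraus operators Q, composing Q with the slices of V x along the second factor
   gives the Kraus operators of a joint instrument of I and J.
   Conversely, the second marginal of a joint instrument G, summed over the
   outcomes of J, is I x, so its Kraus operators form a second Kraus family of
   I x. By the unitary freedom of Kraus representations they are obtained from
   the slices of V x by a contraction T x; the rows of T x, completed by the
   defect of the contraction, are Kraus operators of the postprocessing. *)

From mathcomp Require Import all_boot all_order all_algebra.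
From mathcomp Require Import sesquilinear spectral mxtens ring.
From Stdlib Require Import ClassicalEpsilon.
Set Implicit Arguments.
Unset Strict Implicit.
Unset Printing Implicit Defensive.
Import GRing.Theory Num.Theory.
Local Open Scope ring_scope.

Section Adjoint.
Variable C : numClosedFieldType.
Implicit Types m n p q : nat.

Lemma adjE m n (A : 'M[C]_(m, n)) i j : adj A i j = (A j i)^*.
Proof. by rewrite !mxE. Qed.

Lemma adjK m n (A : 'M[C]_(m, n)) : adj (adj A) = A.
Proof. exact: trmxCK. Qed.

Lemma adjM m n p (A : 'M[C]_(m, n)) (B : 'M[C]_(n, p)) :
  adj (A *m B) = adj B *m adj A.
Proof. by rewrite /adj trmx_mul map_mxM. Qed.

Lemma adjD m n (A B : 'M[C]_(m, n)) : adj (A + B) = adj A + adj B.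
Proof. by rewrite /adj linearD map_mxD. Qed.

Lemma adjB m n (A B : 'M[C]_(m, n)) : adj (A - B) = adj A - adj B.
Proof. by rewrite /adj linearB map_mxB. Qed.

Lemma adjZ m n c (A : 'M[C]_(m, n)) : adj (c *: A) = c^* *: adj A.
Proof. by rewrite /adj linearZ map_mxZ. Qed.

Lemma adj0 m n : adj (0 : 'M[C]_(m, n)) = 0.
Proof. by rewrite /adj trmx0 map_mx0. Qed.

Lemma adj_sum (I : finType) m n (F : I -> 'M[C]_(m, n)) :
  adj (\sum_i F i) = \sum_i adj (F i).
Proof. by rewrite /adj raddf_sum map_mx_sum. Qed.

Lemma adj1 n : adj (1%:M : 'M[C]_n) = 1%:M.
Proof. by rewrite /adj trmx1 map_mx1. Qed.

Lemma adj_tens m n p q (A : 'M[C]_(m, n)) (B : 'M[C]_(p, q)) :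
  adj (A *t B) = adj A *t adj B.
Proof. by rewrite /adj trmx_tens map_mxT. Qed.

Lemma adj_delta m n (i : 'I_m) (j : 'I_n) :
  adj (delta_mx i j : 'M[C]_(m, n)) = delta_mx j i.
Proof. by rewrite /adj trmx_delta map_delta_mx. Qed.

Lemma adj_diag_real n (d : 'rV[C]_n) :
  (forall i, d 0 i \is Num.real) -> adj (diag_mx d) = diag_mx d.
Proof.
move=> dR; rewrite /adj tr_diag_mx map_diag_mx; congr diag_mx.
by apply/rowP=> i; rewrite mxE /= conj_Creal.
Qed.

Lemma mulmx_adj_rows k n (M : 'M[C]_(k, n)) :
  adj M *m M = \sum_i adj (row i M) *m row i M.
Proof.
apply/matrixP => c d; rewrite summxE mxE; apply: eq_bigr => i _.
by rewrite !mxE big_ord1 !mxE.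
Qed.

End Adjoint.

Section Positive.
Variable C : numClosedFieldType.
Implicit Types m n k : nat.

Lemma quad_form_delta n (A : 'M[C]_n) i j :
  (adj (delta_mx i 0 : 'cV_n) *m A *m (delta_mx j 0 : 'cV_n)) 0 0 = A i j.
Proof. by rewrite adj_delta -rowE -colE !mxE. Qed.

Lemma quad_formDZ n (A : 'M[C]_n) (u w : 'cV_n) c :
  (adj (u + c *: w) *m A *m (u + c *: w)) 0 0 =
  (adj u *m A *m u) 0 0 + c * (adj u *m A *m w) 0 0
  + c^* * (adj w *m A *m u) 0 0 + c^* * c * (adj w *m A *m w) 0 0.
Proof.
rewrite adjD adjZ !mulmxDl !mulmxDr -!scalemxAl -!scalemxAr !mxE.
by rewrite mulrA !addrA.
Qed.

(* Polarization: test the form on e_i + c e_j for c = 0, 1 and 'i. *)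
Lemma quad_form_eq0 n (B : 'M[C]_n) :
  (forall v : 'cV_n, (adj v *m B *m v) 0 0 = 0) -> B = 0.
Proof.
move=> qB; apply/matrixP=> i j; rewrite mxE.
have qBij c : B i i + c * B i j + c^* * B j i + c^* * c * B j j = 0.
  by rewrite -(qB (delta_mx i 0 + c *: delta_mx j 0)) quad_formDZ !quad_form_delta.
have Bii : B i i = 0 by have := qBij 0; rewrite rmorph0 !(mul0r, addr0).
have Bjj : B j j = 0 by have := qB (delta_mx j 0); rewrite quad_form_delta.
have := qBij 'i; have := qBij 1.
rewrite conjCi Bii Bjj rmorph1 !(mulr0, mul1r, add0r, addr0) => h1 hi.
have /eqP : 'i * (B i j - B j i) = 0 by rewrite -hi; ring.
rewrite mulf_eq0 (negPf (neq0Ci C)) subr_eq0 => /eqP Bji.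
by move/eqP: h1; rewrite -Bji -mulr2n -mulr_natr mulf_eq0 pnatr_eq0 orbF => /eqP.
Qed.

Lemma psd_adj n (A : 'M[C]_n) : psd A -> adj A = A.
Proof.
move=> pA; apply/eqP; rewrite -subr_eq0; apply/eqP; apply: quad_form_eq0 => v.
have vAv : (adj v *m adj A *m v) 0 0 = ((adj v *m A *m v) 0 0)^*.
  by rewrite -adjE !adjM adjK mulmxA.
by rewrite mulmxBr mulmxBl mxE vAv [X in _ + X]mxE (conj_Creal (ger0_real (pA v))) subrr.
Qed.

Lemma adj_mul_ge0 m (v : 'cV[C]_m) : 0 <= (adj v *m v) 0 0.
Proof. by rewrite mxE; apply: sumr_ge0 => i _; rewrite adjE mulrC mul_conjC_ge0. Qed.

Lemma adj_mul_eq0 m (v : 'cV[C]_m) : (adj v *m v) 0 0 = 0 -> v = 0.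
Proof.
rewrite mxE => v0; apply/matrixP=> i j; rewrite [j]ord1 mxE.
have ge0 (k : 'I_m) : true -> 0 <= adj v 0 k * v k 0.
  by rewrite adjE mulrC mul_conjC_ge0.
have /eqP := psumr_eq0P ge0 v0 (i := i) isT.
by rewrite adjE mulrC mul_conjC_eq0 => /eqP.
Qed.

Lemma adj_mulmx_eq0 m n (Z : 'M[C]_(m, n)) : adj Z *m Z = 0 -> Z = 0.
Proof.
move=> ZZ0; apply/matrixP => i j; rewrite mxE.
have : (adj (Z *m (delta_mx j 0 : 'cV_n)) *m (Z *m (delta_mx j 0 : 'cV_n))) 0 0 = 0.
  by rewrite adjM mulmxA -(mulmxA _ (adj Z)) ZZ0 mulmx0 mul0mx mxE.
by move/adj_mul_eq0/matrixP/(_ i 0); rewrite -colE !mxE.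
Qed.

Lemma psd_conj n k (B : 'M[C]_(k, n)) X : psd X -> psd (B *m X *m adj B).
Proof. by move=> pX v; have := pX (adj B *m v); rewrite adjM adjK !mulmxA. Qed.

Lemma psd1 n : psd (1%:M : 'M[C]_n).
Proof. by move=> v; rewrite mulmx1 adj_mul_ge0. Qed.

Lemma psd_mul_adj n k (N : 'M[C]_(n, k)) : psd (N *m adj N).
Proof. by have := psd_conj N (@psd1 k); rewrite mulmx1. Qed.

Lemma psd_sum (I : finType) n (F : I -> 'M[C]_n) :
  (forall i, psd (F i)) -> psd (\sum_i F i).
Proof.
move=> pF; apply: (big_ind (@psd C n)) => [v|A B pA pB v|//].
  by rewrite mulmx0 mul0mx mxE.
by rewrite mulmxDr mulmxDl mxE addr_ge0.
Qed.

Lemma psdZ n c (A : 'M[C]_n) : 0 <= c -> psd A -> psd (c *: A).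
Proof. by move=> c0 pA v; rewrite -scalemxAr -scalemxAl mxE mulr_ge0. Qed.

Lemma psd_mxtrace_ge0 n (A : 'M[C]_n) : psd A -> 0 <= \tr A.
Proof. by move=> pA; apply: sumr_ge0 => i _; rewrite -quad_form_delta. Qed.

Lemma psd_diag n (d : 'rV[C]_n) : (forall i, 0 <= d 0 i) -> psd (diag_mx d).
Proof.
move=> d0 v; rewrite mxE; apply: sumr_ge0 => i _.
rewrite mxE (bigD1 i) //= big1 ?addr0 => [|j /negPf ji]; last first.
  by rewrite !mxE ji mulr0n mulr0.
by rewrite !mxE eqxx mulr1n mulrAC mulr_ge0 // mulrC mul_conjC_ge0.
Qed.

Lemma psd_spectral n (P : 'M[C]_n) : psd P ->
  exists U : 'M[C]_n, exists d : 'rV[C]_n,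
    [/\ U *m adj U = 1%:M, P = adj U *m diag_mx d *m U & forall i, 0 <= d 0 i].
Proof.
move=> pP; have /orthomx_spectralP : P \is normalmx.
  by apply/normalmxP; rewrite -/(adj P) psd_adj.
set U := spectralmx P; set d := spectral_diag P.
have uU : U \is unitarymx by apply: spectral_unitarymx.
rewrite invmx_unitary // => eP; exists U, d; split => //; first exact/unitarymxP.
move=> i; have := pP (adj U *m delta_mx i 0).
rewrite eP adjM adjK !mulmxA !mulmxtVK // quad_form_delta.
by rewrite mxE eqxx mulr1n.
Qed.

Lemma mulmx_conj_unitary n (U D1 D2 : 'M[C]_n) : U *m adj U = 1%:M ->
  (adj U *m D1 *m U) *m (adj U *m D2 *m U) = adj U *m (D1 *m D2) *m U.
Proof. by move=> UU; rewrite !mulmxA -(mulmxA _ U) UU mulmx1. Qed.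

Lemma psd_sqrt n (A : 'M[C]_n) : psd A -> exists B, psd B /\ B *m B = A.
Proof.
move=> /psd_spectral[U [d [UU -> d0]]].
exists (adj U *m diag_mx (\row_i sqrtC (d 0 i)) *m U); split.
  rewrite -[X in _ *m X]adjK; apply/psd_conj/psd_diag => i.
  by rewrite mxE sqrtC_ge0.
rewrite mulmx_conj_unitary // mulmx_diag; congr (_ *m diag_mx _ *m _).
by apply/rowP=> i; rewrite !mxE -expr2 sqrtCK.
Qed.

Lemma sqrtm_spec n (A : 'M[C]_n) : psd A -> psd (sqrtm A) /\ sqrtm A *m sqrtm A = A.
Proof. by move=> /psd_sqrt; apply: epsilon_spec. Qed.

(* G is the Moore-Penrose inverse of H, obtained by inverting the nonzero
   eigenvalues (0^-1 = 0 takes care of the kernel). *)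
Lemma psd_pinv n (H : 'M[C]_n) : psd H ->
  exists G, [/\ adj G = G, H *m G *m H = H & adj (H *m G) = H *m G].
Proof.
move=> /psd_spectral[U [d [UU -> d0]]].
pose e := \row_i (d 0 i)^-1.
have eR i : e 0 i \is Num.real by rewrite mxE rpredV ger0_real.
have adj_conj (D : 'M[C]_n) : adj (adj U *m D *m U) = adj U *m adj D *m U.
  by rewrite !adjM adjK mulmxA.
exists (adj U *m diag_mx e *m U); split.
- by rewrite adj_conj adj_diag_real.
- rewrite !mulmx_conj_unitary // !mulmx_diag; congr (_ *m diag_mx _ *m _).
  apply/rowP=> i; rewrite !mxE; have [->|di] := eqVneq (d 0 i) 0; first by rewrite !mul0r.
  by rewrite mulfV // mul1r.
- rewrite mulmx_conj_unitary // adj_conj mulmx_diag adj_diag_real // => i.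
  by rewrite mxE; apply: rpredM; [exact: ger0_real | exact: eR].
Qed.

End Positive.

Section LinearMap.
Variables (C : numClosedFieldType) (n q : nat) (Phi : 'M[C]_n -> 'M[C]_q).
Hypothesis linPhi : is_linear_map Phi.

Lemma linear_map0 : Phi 0 = 0.
Proof.
have := linPhi 1 0 0; rewrite !scale1r addr0 => Phi00.
by apply: (@addrI _ (Phi 0)); rewrite addr0 -Phi00.
Qed.

Lemma linear_mapD X Y : Phi (X + Y) = Phi X + Phi Y.
Proof. by have := linPhi 1 X Y; rewrite !scale1r. Qed.

Lemma linear_mapZ c X : Phi (c *: X) = c *: Phi X.
Proof. by rewrite -[c *: X]addr0 linPhi linear_map0 addr0. Qed.

Lemma linear_map_sum (I : finType) (F : I -> 'M[C]_n) :
  Phi (\sum_i F i) = \sum_i Phi (F i).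
Proof. exact: (big_morph Phi linear_mapD linear_map0). Qed.

Lemma linear_map_delta_expand X :
  Phi X = \sum_i \sum_j X i j *: Phi (delta_mx i j).
Proof.
rewrite {1}(matrix_sum_delta X) linear_map_sum; apply: eq_bigr => i _.
by rewrite linear_map_sum; apply: eq_bigr => j _; rewrite linear_mapZ.
Qed.

End LinearMap.

Section LinearMapFacts.
Variable C : numClosedFieldType.
Implicit Types n q : nat.

Lemma eq_linear_map_delta n q (Phi Psi : 'M[C]_n -> 'M[C]_q) :
  is_linear_map Phi -> is_linear_map Psi ->
  (forall i j, Phi (delta_mx i j) = Psi (delta_mx i j)) -> Phi =1 Psi.
Proof.
move=> linPhi linPsi eqPhi X; rewrite (linear_map_delta_expand linPhi).
rewrite (linear_map_delta_expand linPsi).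
by apply: eq_bigr => i _; apply: eq_bigr => j _; rewrite eqPhi.
Qed.

Lemma linear_map_comp n q r (Phi : 'M[C]_q -> 'M[C]_r) (Psi : 'M[C]_n -> 'M[C]_q) :
  is_linear_map Phi -> is_linear_map Psi -> is_linear_map (Phi \o Psi).
Proof. by move=> linPhi linPsi c X Y /=; rewrite linPsi linPhi. Qed.

Lemma linear_map_sumf (I : finType) n q (Phi : I -> 'M[C]_n -> 'M[C]_q) :
  (forall i, is_linear_map (Phi i)) -> is_linear_map (fun X => \sum_i Phi i X).
Proof.
move=> linPhi c X Y; rewrite scaler_sumr -big_split; apply: eq_bigr => i _; exact: linPhi.
Qed.

Lemma mul_outerDZ n (u w : 'cV[C]_n) c :
  (u + c *: w) *m adj (u + c *: w) =
  u *m adj u + c^* *: (u *m adj w) + c *: (w *m adj u) + (c * c^*) *: (w *m adj w).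
Proof.
apply/matrixP => i j; rewrite !mxE !big_ord1 !mxE.
by rewrite rmorphD rmorphM; ring.
Qed.

(* Polarization again: the rank-one operators (e_i + c e_j)(e_i + c e_j)^*
   span the matrix units. *)
Lemma linear_map_outer_eq0 n q (D : 'M[C]_n -> 'M[C]_q) :
  is_linear_map D -> (forall v : 'cV_n, D (v *m adj v) = 0) -> D =1 (fun=> 0).
Proof.
move=> linD Dvv; apply: eq_linear_map_delta => // [c X Y|i j].
  by rewrite scaler0 addr0.
pose u : 'cV[C]_n := delta_mx i 0; pose w : 'cV[C]_n := delta_mx j 0.
have Duw c : c^* *: D (u *m adj w) + c *: D (w *m adj u) = 0.
  have := Dvv (u + c *: w); rewrite mul_outerDZ !(linear_mapD linD) !(linear_mapZ linD).
  by rewrite !Dvv scaler0 addr0 add0r.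
have := Duw 'i; have := Duw 1; rewrite conjCi rmorph1 !scale1r => D1 Di.
have /eqP : 'i *: (D (w *m adj u) - D (u *m adj w)) = 0.
  by rewrite scalerBr addrC -Di scaleNr.
rewrite scaler_eq0 (negPf (neq0Ci C)) subr_eq0 => /eqP Dwu.
move/eqP: D1; rewrite Dwu -mulr2n -scaler_nat scaler_eq0 pnatr_eq0 /=.
by rewrite adj_delta mul_delta_mx => /eqP.
Qed.

Lemma eq_linear_map_states n q (Phi Psi : 'M[C]_n -> 'M[C]_q) :
  is_linear_map Phi -> is_linear_map Psi ->
  (forall rho, state rho -> Phi rho = Psi rho) -> Phi =1 Psi.
Proof.
move=> linPhi linPsi eqPhi X; apply/eqP; rewrite -subr_eq0; apply/eqP; move: X.
apply: (linear_map_outer_eq0 (D := fun X => Phi X - Psi X)) => [c X Y|v].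
  by rewrite linPhi linPsi scalerBr opprD addrACA.
have [v0|t_neq0] := eqVneq ((adj v *m v) 0 0) 0.
  by rewrite (adj_mul_eq0 v0) mul0mx linear_map0 // linear_map0 // subrr.
set t := (adj v *m v) 0 0 in t_neq0.
have -> : v *m adj v = t *: (t^-1 *: (v *m adj v)) by rewrite scalerA divff // scale1r.
rewrite (linear_mapZ linPhi) (linear_mapZ linPsi) eqPhi ?subrr //.
split; first by apply: psdZ (psd_mul_adj v); rewrite invr_ge0 adj_mul_ge0.
by rewrite mxtraceZ mxtrace_mulC /mxtrace big_ord1 mulVf.
Qed.

End LinearMapFacts.

Section Kraus.
Variable C : numClosedFieldType.
Implicit Types n q : nat.

Definition kraus {I : finType} {n q} (A : I -> 'M[C]_(q, n)) (X : 'M[C]_n) : 'M[C]_q :=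
  \sum_i A i *m X *m adj (A i).

Lemma kraus_linear (I : finType) n q (A : I -> 'M[C]_(q, n)) : is_linear_map (kraus A).
Proof.
move=> c X Y; rewrite /kraus scaler_sumr -big_split /=; apply: eq_bigr => i _.
by rewrite mulmxDr mulmxDl -scalemxAr -scalemxAl.
Qed.

Lemma kraus_mull (I : finType) m n p (L : I -> 'M[C]_(m, n)) (Q : 'M[C]_(p, m)) X :
  kraus (fun i => Q *m L i) X = Q *m kraus L X *m adj Q.
Proof.
rewrite mulmx_sumr mulmx_suml; apply: eq_bigr => i _.
by rewrite adjM !mulmxA.
Qed.

Lemma kraus_mulr (I : finType) m n q (L : I -> 'M[C]_(q, m)) (M : 'M[C]_(m, n)) X :
  kraus (fun i => L i *m M) X = kraus L (M *m X *m adj M).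
Proof. by apply: eq_bigr => i _; rewrite adjM !mulmxA. Qed.

Lemma kraus_delta p a (v : 'I_p) (Y : 'M[C]_a) :
  kraus (fun i => delta_mx v i) Y = \tr Y *: delta_mx v v.
Proof.
rewrite /mxtrace scaler_suml; apply: eq_bigr => i _.
have eY : delta_mx 0 i *m Y *m delta_mx i 0 = (Y i i)%:M :> 'M_1.
  by rewrite -rowE -colE [LHS]mx11_scalar !mxE.
rewrite adj_delta -(mul_delta_mx (0 : 'I_1)) -[delta_mx i v](mul_delta_mx (0 : 'I_1)).
rewrite !mulmxA -(mulmxA (delta_mx v 0)) -(mulmxA (delta_mx v 0)) eY.
by rewrite mul_mx_scalar -scalemxAl mul_delta_mx.
Qed.

Lemma sum_triple (R : nmodType) (A B D : finType) (F : A * B * D -> R) :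
  \sum_b F b = \sum_i \sum_j \sum_k F (i, j, k).
Proof. by rewrite [RHS]pair_bigA [RHS]pair_bigA; apply: eq_bigr => -[[]]. Qed.

Lemma big_mxtens_index (R : nmodType) u w (F : 'I_(u * w) -> R) :
  \sum_k F k = \sum_i \sum_j F (mxtens_index (i, j)).
Proof.
rewrite pair_bigA (reindex (@mxtens_index u w)) /=; first by apply: eq_bigr => -[].
by exists (@mxtens_unindex u w) => k _; [apply: mxtens_indexK | apply: mxtens_unindexK].
Qed.

Lemma mulmx_tens1l k n q r (B : 'M[C]_(q, n)) (Y : 'M[C]_(k * n, r)) i s j :
  ((1%:M *t B) *m Y) (mxtens_index (i, s)) j = \sum_c B s c * Y (mxtens_index (i, c)) j.
Proof.
rewrite mxE big_mxtens_index (bigD1 i) //= [X in _ + X]big1 => [|i' /negPf i'i].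
  by rewrite addr0; apply: eq_bigr => c _; rewrite tensmxE !mxE eqxx mul1r.
by rewrite big1 // => c _; rewrite tensmxE !mxE eq_sym i'i !mul0r.
Qed.

Lemma mulmx_adj_tens1r k n q r (B : 'M[C]_(q, n)) (Y : 'M[C]_(r, k * n)) i t j :
  (Y *m adj (1%:M *t B)) j (mxtens_index (i, t)) =
  \sum_d Y j (mxtens_index (i, d)) * (B t d)^*.
Proof.
rewrite mxE big_mxtens_index (bigD1 i) //= [X in _ + X]big1 => [|i' /negPf i'i].
  by rewrite addr0; apply: eq_bigr => c _; rewrite adjE tensmxE !mxE eqxx mul1r.
by rewrite big1 // => c _; rewrite adjE tensmxE !mxE eq_sym i'i mul0r rmorph0 mulr0.
Qed.

Lemma tens1_conjE k n q (B : 'M[C]_(q, n)) (X : 'M[C]_(k * n)) i s j t :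
  ((1%:M *t B) *m X *m adj (1%:M *t B)) (mxtens_index (i, s)) (mxtens_index (j, t))
  = (B *m (\matrix_(c, d) X (mxtens_index (i, c)) (mxtens_index (j, d))) *m adj B) s t.
Proof.
rewrite mulmx_adj_tens1r mxE; apply: eq_bigr => d _.
rewrite mulmx_tens1l adjE mxE; congr (_ * _); apply: eq_bigr => c _.
by rewrite mxE.
Qed.

Lemma ampl_kraus (I : finType) n q k (A : I -> 'M[C]_(q, n)) (X : 'M[C]_(k * n)) :
  ampl (kraus A) X = \sum_i (1%:M *t A i) *m X *m adj (1%:M *t A i).
Proof.
apply/matrixP => p p'.
case: (mxtens_indexP p) => i s; case: (mxtens_indexP p') => j t.
rewrite mxE !mxtens_indexK /= !summxE; apply: eq_bigr => r _.
by rewrite tens1_conjE.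
Qed.

Lemma kraus_cp (I : finType) n q (A : I -> 'M[C]_(q, n)) : completely_positive (kraus A).
Proof. by move=> k X pX; rewrite ampl_kraus; apply: psd_sum => i; apply: psd_conj. Qed.

Lemma mxtrace_sum (I : finType) n (F : I -> 'M[C]_n) :
  \tr (\sum_i F i) = \sum_i \tr (F i).
Proof. exact: (big_morph _ (@mxtraceD _ _) (@mxtrace0 _ _)). Qed.

Lemma mxtrace_kraus (I : finType) n q (A : I -> 'M[C]_(q, n)) X :
  \tr (kraus A X) = \tr ((\sum_i adj (A i) *m A i) *m X).
Proof.
rewrite mxtrace_sum mulmx_suml mxtrace_sum; apply: eq_bigr => i _.
by rewrite mxtrace_mulC mulmxA.
Qed.

Lemma kraus_instrument (Omega K : finType) n q (A : Omega -> K -> 'M[C]_(q, n)) :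
  \sum_x \sum_k adj (A x k) *m A x k = 1%:M -> instrument (fun x => kraus (A x)).
Proof.
move=> sumA1; have trP X : \tr (\sum_x kraus (A x) X) = \tr X.
  by rewrite mxtrace_sum; under eq_bigr do rewrite mxtrace_kraus;
     rewrite -mxtrace_sum -mulmx_suml sumA1 mul1mx.
split=> // x; split; [exact: kraus_linear | split; first exact: kraus_cp].
move=> rho prho; rewrite -(trP rho) mxtrace_sum (bigD1 x) //= lerDl.
apply: sumr_ge0 => y _; rewrite mxtrace_sum.
by apply: sumr_ge0 => k _; apply/psd_mxtrace_ge0/psd_conj.
Qed.

Lemma mxtrace_mul_delta n (M : 'M[C]_n) i j : \tr (M *m delta_mx j i) = M i j.
Proof.
rewrite mxtrace_mulC -(mul_delta_mx (0 : 'I_1)) -mulmxA -rowE mxtrace_mulC.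
by rewrite -colE /mxtrace big_ord1 !mxE.
Qed.

Lemma trace_preserving_kraus_sum (Omega K : finType) n q (A : Omega -> K -> 'M[C]_(q, n)) :
  (forall X, \tr (\sum_x kraus (A x) X) = \tr X) ->
  \sum_x \sum_k adj (A x k) *m A x k = 1%:M.
Proof.
move=> trA; apply/matrixP => i j; have := trA (delta_mx j i).
rewrite mxtrace_sum; under eq_bigr do rewrite mxtrace_kraus.
rewrite -mxtrace_sum -mulmx_suml mxtrace_mul_delta => ->.
by rewrite -[delta_mx j i]mul1mx mxtrace_mul_delta.
Qed.

Lemma mulmx_delta_adj m n q (M : 'M[C]_(m, n)) (N : 'M[C]_(q, n)) i j s t :
  (M *m delta_mx i j *m adj N) s t = M s i * (N t j)^*.
Proof.
rewrite -(mul_delta_mx (0 : 'I_1)) mulmxA -colE -mulmxA -rowE !mxE big_ord1.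
by rewrite !mxE.
Qed.

(* Choi: the Kraus operators are the columns of a square root of the Choi
   matrix ampl Phi (w *m adj w), w the unnormalized maximally entangled vector. *)
Lemma cp_kraus n q (Phi : 'M[C]_n -> 'M[C]_q) :
  is_linear_map Phi -> completely_positive Phi ->
  exists A : 'I_(n * q) -> 'M[C]_(q, n), Phi =1 kraus A.
Proof.
move=> linPhi cpPhi.
pose w : 'cV[C]_(n * n) := \col_p ((mxtens_unindex p).1 == (mxtens_unindex p).2)%:R.
have [B [pB BB]] := psd_sqrt (cpPhi n (w *m adj w) (psd_mul_adj w)).
exists (fun r => \matrix_(s, j) B (mxtens_index (j, s)) r).
apply: eq_linear_map_delta => // [|i j]; first exact: kraus_linear.
apply/matrixP => s t.
have -> : Phi (delta_mx i j) s t
    = ampl Phi (w *m adj w) (mxtens_index (i, s)) (mxtens_index (j, t)).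
  rewrite mxE !mxtens_indexK /=; congr (Phi _ s t).
  apply/matrixP => c d; rewrite !mxE big_ord1 !mxE !mxtens_indexK /=.
  rewrite rmorph_nat -natrM; congr (_%:R).
  by rewrite [c == i]eq_sym [d == j]eq_sym; do 2 case: eqP.
rewrite -BB -{2}(psd_adj pB) summxE mxE; apply: eq_bigr => r _.
by rewrite mulmx_delta_adj !mxE.
Qed.

Lemma instrument_kraus (Omega : finType) n q (I : Omega -> 'M[C]_n -> 'M[C]_q) :
  instrument I -> exists A : Omega -> 'I_(n * q) -> 'M[C]_(q, n),
    (forall x, I x =1 kraus (A x)) /\ \sum_x \sum_k adj (A x k) *m A x k = 1%:M.
Proof.
move=> instrI; have krausI x : exists Ax : 'I_(n * q) -> 'M[C]_(q, n), I x =1 kraus Ax.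
  by have [linI [cpI _]] := instrI.1 x; apply: cp_kraus.
have [A IA] := ClassicalEpsilon.choice _ krausI.
exists A; split => //; apply: trace_preserving_kraus_sum => X.
by rewrite -instrI.2; congr (\tr _); apply: eq_bigr => x _; rewrite IA.
Qed.

Lemma instrument_card_gt0 (Lambda : finType) n p (J : Lambda -> 'M[C]_n -> 'M[C]_p) :
  instrument J -> (0 < n)%N -> (0 < #|{: Lambda * 'I_p}|)%N.
Proof.
move=> [_ trJ] n_gt0; rewrite lt0n; apply: contraTneq n_gt0 => /card0_eq empty.
have := trJ 1%:M; rewrite mxtrace1 mxtrace_sum.
under eq_bigr do rewrite /mxtrace.
by rewrite pair_bigA big_pred0 // => /esym/eqP; rewrite pnatr_eq0 => /eqP ->.
Qed.

End Kraus.

Section PartialTrace.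
Variable C : numClosedFieldType.
Implicit Types u w n q : nat.

Definition slice1 u w n (Z : 'M[C]_(u * w, n)) (i : 'I_u) : 'M[C]_(w, n) :=
  \matrix_(j, c) Z (mxtens_index (i, j)) c.
Definition slice2 u w n (Z : 'M[C]_(u * w, n)) (j : 'I_w) : 'M[C]_(u, n) :=
  \matrix_(i, c) Z (mxtens_index (i, j)) c.
Definition unslice1 u w n (F : 'I_u -> 'M[C]_(w, n)) : 'M[C]_(u * w, n) :=
  \matrix_(k, c) F (mxtens_unindex k).1 (mxtens_unindex k).2 c.

Lemma slice1_unslice1 u w n (F : 'I_u -> 'M[C]_(w, n)) i : slice1 (unslice1 F) i = F i.
Proof. by apply/matrixP => j c; rewrite !mxE mxtens_indexK. Qed.

Definition gram {a m n} (L : 'I_a -> 'M[C]_(m, n)) (X : 'M[C]_n) : 'M[C]_a :=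
  \matrix_(i, j) \tr (L i *m X *m adj (L j)).

Lemma ptr1_linear u w : is_linear_map (@ptr1 C u w).
Proof.
move=> c A B; apply/matrixP => j k; rewrite !mxE mulr_sumr -big_split.
by apply: eq_bigr => i _; rewrite !mxE.
Qed.

Lemma ptr2_linear u w : is_linear_map (@ptr2 C u w).
Proof.
move=> c A B; apply/matrixP => j k; rewrite !mxE mulr_sumr -big_split.
by apply: eq_bigr => i _; rewrite !mxE.
Qed.

Lemma conj_mxE m m' n (Z : 'M[C]_(m, n)) (Z' : 'M[C]_(m', n)) (X : 'M[C]_n) s t :
  (Z *m X *m adj Z') s t = \sum_d \sum_c Z s c * X c d * (Z' t d)^*.
Proof.
rewrite mxE; apply: eq_bigr => d _; rewrite mxE mulr_suml; apply: eq_bigr => c _.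
by rewrite !mxE.
Qed.

Lemma ptr1_conj u w n (Z : 'M[C]_(u * w, n)) X :
  ptr1 (Z *m X *m adj Z) = kraus (slice1 Z) X.
Proof.
apply/matrixP => j k; rewrite mxE summxE; apply: eq_bigr => i _.
by rewrite !conj_mxE; apply: eq_bigr => d _; apply: eq_bigr => c _; rewrite !mxE.
Qed.

Lemma ptr2_conj u w n (Z : 'M[C]_(u * w, n)) X :
  ptr2 (Z *m X *m adj Z) = kraus (slice2 Z) X.
Proof.
apply/matrixP => i l; rewrite mxE summxE; apply: eq_bigr => j _.
by rewrite !conj_mxE; apply: eq_bigr => d _; apply: eq_bigr => c _; rewrite !mxE.
Qed.

Lemma ptr1_conj_gram u w n (Z : 'M[C]_(u * w, n)) X :
  ptr1 (Z *m X *m adj Z) = gram (slice2 Z) X.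
Proof.
apply/matrixP => j k; rewrite !mxE; apply: eq_bigr => i _.
by rewrite !conj_mxE; apply: eq_bigr => d _; apply: eq_bigr => c _; rewrite !mxE.
Qed.

Lemma ptr2_conj_gram u w n (Z : 'M[C]_(u * w, n)) X :
  ptr2 (Z *m X *m adj Z) = gram (slice1 Z) X.
Proof.
apply/matrixP => i l; rewrite !mxE; apply: eq_bigr => j _.
by rewrite !conj_mxE; apply: eq_bigr => d _; apply: eq_bigr => c _; rewrite !mxE.
Qed.

Lemma sum_adj_slice1 u w n (Z : 'M[C]_(u * w, n)) :
  \sum_i adj (slice1 Z i) *m slice1 Z i = adj Z *m Z.
Proof.
apply/matrixP => c c'; rewrite summxE mxE big_mxtens_index.
by apply: eq_bigr => i _; rewrite mxE; apply: eq_bigr => j _; rewrite !mxE.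
Qed.

Lemma sum_adj_slice2 u w n (Z : 'M[C]_(u * w, n)) :
  \sum_j adj (slice2 Z j) *m slice2 Z j = adj Z *m Z.
Proof.
apply/matrixP => c c'; rewrite summxE mxE big_mxtens_index exchange_big.
by apply: eq_bigr => j _; rewrite mxE; apply: eq_bigr => i _; rewrite !mxE.
Qed.

Lemma mulmx_tensl1 u w r (A : 'M[C]_u) (Y : 'M[C]_(u * w, r)) i j c :
  ((A *t 1%:M) *m Y) (mxtens_index (i, j)) c = \sum_i' A i i' * Y (mxtens_index (i', j)) c.
Proof.
rewrite mxE big_mxtens_index; apply: eq_bigr => i' _.
rewrite (bigD1 j) //= [X in _ + X]big1 => [|j' /negPf j'j].
  by rewrite addr0 tensmxE !mxE eqxx mulr1.
by rewrite tensmxE !mxE eq_sym j'j mulr0 mul0r.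
Qed.

Lemma mulmx_tensr1 u w r (B : 'M[C]_u) (Y : 'M[C]_(r, u * w)) c i j :
  (Y *m (B *t 1%:M)) c (mxtens_index (i, j)) = \sum_i' Y c (mxtens_index (i', j)) * B i' i.
Proof.
rewrite mxE big_mxtens_index; apply: eq_bigr => i' _.
rewrite (bigD1 j) //= [X in _ + X]big1 => [|j' /negPf j'j].
  by rewrite addr0 tensmxE !mxE eqxx mulr1.
by rewrite tensmxE !mxE j'j !mulr0.
Qed.

Lemma ptr1_tens_conj u w (A B : 'M[C]_u) (M : 'M[C]_(u * w)) :
  ptr1 ((A *t 1%:M) *m M *m (B *t 1%:M)) = ptr1 (M *m ((B *m A) *t 1%:M)).
Proof.
apply/matrixP => j k; rewrite !mxE.
under eq_bigr do rewrite mulmx_tensr1.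
under [RHS]eq_bigr do rewrite mulmx_tensr1.
under eq_bigr do under eq_bigr do rewrite mulmx_tensl1 mulr_suml.
rewrite exchange_big; under eq_bigr do rewrite exchange_big; rewrite exchange_big.
apply: eq_bigr => i1 _; apply: eq_bigr => i2 _.
by rewrite mxE mulr_sumr; apply: eq_bigr => i _; ring.
Qed.

Lemma tensmx_suml (I : finType) u w v z (F : I -> 'M[C]_(u, w)) (B : 'M[C]_(v, z)) :
  \sum_i (F i *t B) = (\sum_i F i) *t B.
Proof.
apply/matrixP => s t; rewrite summxE !mxE summxE mulr_suml.
by apply: eq_bigr => i _; rewrite !mxE.
Qed.

Lemma tensmx11 u w : (1%:M : 'M[C]_u) *t (1%:M : 'M[C]_w) = 1%:M.
Proof.
apply/matrixP => s t; case: (mxtens_indexP s) => i j; case: (mxtens_indexP t) => k l.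
rewrite tensmxE !mxE (inj_eq (can_inj (@mxtens_indexK u w))) -natrM.
by rewrite xpair_eqE mulnb.
Qed.

Lemma sum_ptr2_kraus (Lambda : finType) r u w n (K : Lambda -> 'I_r -> 'M[C]_(u * w, n)) X :
  \sum_y ptr2 (kraus (K y) X)
  = kraus (fun b : Lambda * 'I_r * 'I_w => slice2 (K b.1.1 b.1.2) b.2) X.
Proof.
rewrite [RHS]sum_triple; apply: eq_bigr => y _.
rewrite (linear_map_sum (@ptr2_linear u w)); apply: eq_bigr => k _.
exact: ptr2_conj.
Qed.

End PartialTrace.

Section Gram.
Variable C : numClosedFieldType.
Variables (a m n : nat) (L : 'I_a -> 'M[C]_(m, n)).

Lemma mxtrace_gram X : \tr (gram L X) = \tr (kraus L X).
Proof. by rewrite mxtrace_sum; apply: eq_bigr => i _; rewrite mxE. Qed.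

Lemma gram_conj q (T : 'M[C]_(q, a)) X :
  T *m gram L X *m adj T = gram (fun k => \sum_i T k i *: L i) X.
Proof.
apply/matrixP => k k'; rewrite conj_mxE mxE !mulmx_suml mxtrace_sum exchange_big.
apply: eq_bigr => i _; rewrite adj_sum !mulmx_sumr mxtrace_sum.
apply: eq_bigr => j _; rewrite adjZ -!scalemxAl -scalemxAr !mxtraceZ !mxE; ring.
Qed.

Lemma sum_gram_mull (K : finType) p (Q : K -> 'M[C]_(p, m)) X :
  \sum_r adj (Q r) *m Q r = 1%:M -> \sum_r gram (fun i => Q r *m L i) X = gram L X.
Proof.
move=> sumQ1; apply/matrixP => i j; rewrite summxE mxE.
under eq_bigr do rewrite mxE adjM !mulmxA mxtrace_mulC !mulmxA.
by rewrite -mxtrace_sum -!mulmx_suml sumQ1 mul1mx.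
Qed.

End Gram.

Section UnitaryFreedom.
Variable C : numClosedFieldType.

(* With H := A adj A, G its pseudo-inverse and P := H G the projection onto
   the range of A, T := B adj A G satisfies T A = B and adj T T = P. *)
Lemma adj_mul_eq_contraction a b q (A : 'M[C]_(a, q)) (B : 'M[C]_(b, q)) :
  adj A *m A = adj B *m B ->
  exists T : 'M[C]_(b, a), T *m A = B /\ exists N : 'M[C]_a, 1%:M - adj T *m T = N *m adj N.
Proof.
move=> AB; have [G [GG HGH PP]] := psd_pinv (psd_mul_adj A).
set H := A *m adj A in HGH PP; set P := H *m G in HGH PP.
have HH : adj H = H by rewrite adjM adjK.
have P2 : P *m P = P by rewrite {2}/P mulmxA HGH.
have PA : P *m A = A.
  apply/eqP; rewrite -subr_eq0; apply/eqP.
  suff PA0 : adj (P *m A - A) = 0 by rewrite -[P *m A - A]adjK PA0 adj0.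
  apply: adj_mulmx_eq0; rewrite adjK -[X in _ - X]mul1mx -mulmxBl adjM !mulmxA.
  by rewrite -(mulmxA _ A) -/H mulmxBl HGH mul1mx subrr mul0mx.
have AQ : A *m (adj A *m (G *m A) - 1%:M) = 0.
  by rewrite mulmxBr mulmx1 !mulmxA -/H -/P PA subrr.
have TA : B *m adj A *m G *m A = B.
  apply/eqP; rewrite -subr_eq0 -[X in _ - X]mulmx1 -!mulmxA (mulmxA (adj A)) -mulmxBr.
  apply/eqP/adj_mulmx_eq0; rewrite adjM -mulmxA (mulmxA (adj B)) -AB -!mulmxA AQ.
  by rewrite !mulmx0.
have TT : adj (B *m adj A *m G) *m (B *m adj A *m G) = P.
  have GH : G *m H = P by rewrite -PP adjM GG HH.
  rewrite !adjM adjK GG -!mulmxA (mulmxA (adj B)) -AB !mulmxA -/H -(mulmxA _ A) -/H.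
  by rewrite -(mulmxA _ H) -/P -(mulmxA G) -/H GH P2.
exists (B *m adj A *m G); split => //; exists (1%:M - P).
by rewrite TT adjB adj1 PP mulmxBl mul1mx mulmxBr mulmx1 P2 subrr subr0.
Qed.

Definition mxvec_rows k m n (F : 'I_k -> 'M[C]_(m, n)) : 'M[C]_(k, m * n) :=
  \matrix_i mxvec (F i).

Lemma kraus_eq_adj_mul_rows a b m n (L : 'I_a -> 'M[C]_(m, n)) (M : 'I_b -> 'M[C]_(m, n)) :
  kraus L =1 kraus M ->
  adj (mxvec_rows L) *m mxvec_rows L = adj (mxvec_rows M) *m mxvec_rows M.
Proof.
move=> eqLM; apply/matrixP => s s'.
case: (mxvec_indexP s) => k j; case: (mxvec_indexP s') => k' j'.
have := congr1 (fun Y : 'M[C]_m => Y k' k) (eqLM (delta_mx j' j)).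
rewrite !summxE /=; under eq_bigr do rewrite mulmx_delta_adj.
under [in RHS]eq_bigr do rewrite mulmx_delta_adj.
move=> eq_kk'; rewrite !mxE; under eq_bigr do rewrite !mxE !mxvecE mulrC.
by rewrite eq_kk'; apply: eq_bigr => i _; rewrite !mxE !mxvecE mulrC.
Qed.

Lemma kraus_eq_contraction (K : finType) a m n
    (L : 'I_a -> 'M[C]_(m, n)) (M : K -> 'M[C]_(m, n)) :
  kraus L =1 kraus M ->
  exists (T : K -> 'rV[C]_a) (N : 'M[C]_a),
    (forall k, M k = \sum_i T k 0 i *: L i) /\ \sum_k adj (T k) *m T k + N *m adj N = 1%:M.
Proof.
move=> eqLM; pose Mo (j : 'I_#|K|) := M (enum_val j).
have eqLMo : kraus L =1 kraus Mo.
  by move=> X; rewrite eqLM /kraus /Mo -(big_enum_val (fun k => M k *m X *m adj (M k))).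
have [T0 [T0L [N T0N]]] := adj_mul_eq_contraction (kraus_eq_adj_mul_rows eqLMo).
exists (fun k => row (enum_rank k) T0), N; split.
  move=> k; apply: (can_inj mxvecK); rewrite linear_sum.
  have := congr1 (row (enum_rank k)) T0L.
  rewrite row_mul mulmx_sum_row /mxvec_rows !rowK /Mo enum_rankK => <-.
  by apply: eq_bigr => i _; rewrite rowK linearZ !mxE.
rewrite -T0N mulmx_adj_rows (big_enum_val (fun k => adj (row (enum_rank k) T0) *m _)) /=.
by under eq_bigr do rewrite enum_valK; rewrite addrC subrK.
Qed.

End UnitaryFreedom.

Section JointFromPostprocessing.
Variables (C : numClosedFieldType) (Omega Lambda K : finType) (n m p a : nat).
Variables (V : Omega -> 'M[C]_(a * m, n)) (Q : Omega -> Lambda -> K -> 'M[C]_(p, a)).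

(* V x with its two tensor factors swapped, followed by 1 *t Q x y k. *)
Definition joint_kraus x y k : 'M[C]_(m * p, n) :=
  unslice1 (fun j => Q x y k *m slice2 (V x) j).

Lemma joint_kraus_ptr1 x y X :
  ptr1 (kraus (joint_kraus x y) X) = kraus (Q x y) (ptr2 (V x *m X *m adj (V x))).
Proof.
rewrite (linear_map_sum (@ptr1_linear C m p)); apply: eq_bigr => k _.
rewrite ptr1_conj ptr2_conj -kraus_mull; apply: eq_bigr => j _.
by rewrite slice1_unslice1.
Qed.

Hypothesis sumQ : forall x, \sum_y \sum_k adj (Q x y k) *m Q x y k = 1%:M.

Lemma joint_kraus_ptr2 x X :
  \sum_y ptr2 (kraus (joint_kraus x y) X) = ptr1 (V x *m X *m adj (V x)).
Proof.
rewrite ptr1_conj_gram -(sum_gram_mull _ (Q := fun yk => Q x yk.1 yk.2)); last first.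
  by rewrite -(pair_bigA _ (fun y k => adj (Q x y k) *m Q x y k)).
rewrite -(pair_bigA _ (fun y k => gram (fun j => Q x y k *m slice2 (V x) j) X)).
apply: eq_bigr => y _; rewrite (linear_map_sum (@ptr2_linear C m p)).
apply: eq_bigr => k _; rewrite ptr2_conj_gram; apply/matrixP => i j.
by rewrite !mxE !slice1_unslice1.
Qed.

Hypothesis sumV : \sum_x adj (V x) *m V x = 1%:M.

Lemma joint_kraus_sum :
  \sum_xy \sum_k adj (joint_kraus xy.1 xy.2 k) *m joint_kraus xy.1 xy.2 k = 1%:M.
Proof.
rewrite -(pair_bigA _ (fun x y => \sum_k adj (joint_kraus x y k) *m joint_kraus x y k)).
rewrite -sumV.
apply: eq_bigr => x _; rewrite -sum_adj_slice2.
transitivity (\sum_j adj (slice2 (V x) j) *m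
    (\sum_y \sum_k adj (Q x y k) *m Q x y k) *m slice2 (V x) j); last first.
  by rewrite sumQ; apply: eq_bigr => j _; rewrite mulmx1.
under [RHS]eq_bigr do rewrite mulmx_sumr mulmx_suml.
rewrite [RHS]exchange_big; apply: eq_bigr => y _ /=.
under [RHS]eq_bigr do rewrite mulmx_sumr mulmx_suml.
rewrite [RHS]exchange_big; apply: eq_bigr => k _ /=.
rewrite -sum_adj_slice1; apply: eq_bigr => j _.
by rewrite slice1_unslice1 adjM !mulmxA.
Qed.

End JointFromPostprocessing.

Section PostprocessingFromJoint.
Variables (C : numClosedFieldType) (Lambda : finType) (a m n p r : nat).
Variables (L : 'I_a -> 'M[C]_(m, n)) (K : Lambda -> 'I_r -> 'M[C]_(m * p, n)).
Variables (T : Lambda * 'I_r * 'I_p -> 'rV[C]_a) (N : 'M[C]_a) (y0 : Lambda) (v0 : 'I_p).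

(* The defect N is sent to the fixed outcome y0 and output v0: on an input P
   it only contributes tr (adj N P N) times a matrix unit, and that trace
   vanishes because T already carries the whole trace of kraus L. *)
Definition post_kraus y (s : 'I_r + 'I_a) : 'M[C]_(p, a) :=
  match s with
  | inl k => \matrix_v T (y, k, v)
  | inr i => (y == y0)%:R *: (delta_mx v0 i *m adj N)
  end.

Hypothesis TN : \sum_b adj (T b) *m T b + N *m adj N = 1%:M.

Lemma post_kraus_sum : \sum_y \sum_s adj (post_kraus y s) *m post_kraus y s = 1%:M.
Proof.
under eq_bigr do rewrite big_sumType /=.
rewrite big_split /= -TN; congr (_ + _).
  rewrite sum_triple; apply: eq_bigr => y _; apply: eq_bigr => k _.
  by rewrite mulmx_adj_rows; apply: eq_bigr => v _; rewrite rowK.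
rewrite (bigD1 y0) //= [X in _ + X]big1 ?addr0 => [|y /negPf yy0]; last first.
  by apply: big1 => i _; rewrite yy0 scale0r adj0 mul0mx.
under eq_bigr do rewrite eqxx scale1r adjM adjK adj_delta mulmxA -(mulmxA N) mul_delta_mx.
by rewrite -mulmx_suml -mulmx_sumr -mx1_sum_delta mulmx1.
Qed.

Hypotheses (eqLK : kraus L =1 kraus (fun b => slice2 (K b.1.1 b.1.2) b.2))
  (KT : forall b, slice2 (K b.1.1 b.1.2) b.2 = \sum_i T b 0 i *: L i).

Lemma mxtrace_defect X : \tr (adj N *m gram L X *m N) = 0.
Proof.
have trT b : \tr (adj (T b) *m T b *m gram L X)
    = \tr (slice2 (K b.1.1 b.1.2) b.2 *m X *m adj (slice2 (K b.1.1 b.1.2) b.2)).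
  by rewrite -mulmxA mxtrace_mulC gram_conj mxtrace_gram /kraus big_ord1 KT.
have := congr1 (fun M => \tr (M *m gram L X)) TN.
rewrite /= mul1mx mulmxDl mxtraceD mulmx_suml mxtrace_sum.
under eq_bigr do rewrite trT.
rewrite -mxtrace_sum -/(kraus _ X) -eqLK -mxtrace_gram -[RHS]addr0 => /addrI <-.
by rewrite mxtrace_mulC mulmxA.
Qed.

Lemma post_kraus_gram y X : kraus (post_kraus y) (gram L X) = ptr1 (kraus (K y) X).
Proof.
rewrite /kraus big_sumType /= [X in _ + X](_ : _ = 0) ?addr0; last first.
  have [_|_] := eqVneq y y0; last by apply: big1 => i _; rewrite scale0r !mul0mx.
  under eq_bigr do rewrite scale1r.
  by rewrite -/(kraus _ _) kraus_mulr adjK kraus_delta mxtrace_defect scale0r.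
rewrite (linear_map_sum (@ptr1_linear C m p)); apply: eq_bigr => k _.
rewrite gram_conj ptr1_conj_gram; apply/matrixP => v v'; rewrite !mxE.
have Krow u : \sum_i (\matrix_v T (y, k, v)) u i *: L i = slice2 (K y k) u.
  by rewrite (KT (y, k, u)); apply: eq_bigr => i _; rewrite mxE.
by rewrite !Krow.
Qed.

End PostprocessingFromJoint.

Section Dilation.
Variables (C : numClosedFieldType) (Omega : finType) (n m a : nat).
Variables (I : Omega -> 'M[C]_n -> 'M[C]_m) (W : 'M[C]_(a * m, n)) (E : Omega -> 'M[C]_a).

Definition dilation_branch x : 'M[C]_(a * m, n) := (sqrtm (E x) *t 1%:M) *m W.
Local Notation V := dilation_branch.

Hypothesis dilIWE : dilation I W E.

Lemma sqrtm_povm x : psd (sqrtm (E x)) /\ sqrtm (E x) *m sqrtm (E x) = E x.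
Proof. by have [_ [[psdE _] _]] := dilIWE; apply: sqrtm_spec. Qed.

Lemma adj_sqrtm_tens1 x : adj (sqrtm (E x) *t 1%:M) = sqrtm (E x) *t (1%:M : 'M[C]_m).
Proof. by rewrite adj_tens adj1 psd_adj //; case: (sqrtm_povm x). Qed.

Lemma complementaryE x X : complementary W E x X = ptr2 (V x *m X *m adj (V x)).
Proof. by rewrite /complementary adjM adj_sqrtm_tens1 !mulmxA. Qed.

Lemma dilation_ptr1 x rho : state rho -> I x rho = ptr1 (V x *m rho *m adj (V x)).
Proof.
move=> st; have [_ [_ IW]] := dilIWE; rewrite IW // adjM adj_sqrtm_tens1.
have -> : (sqrtm (E x) *t 1%:M) *m W *m rho *m (adj W *m (sqrtm (E x) *t 1%:M))
    = (sqrtm (E x) *t 1%:M) *m (W *m rho *m adj W) *m (sqrtm (E x) *t 1%:M).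
  by rewrite !mulmxA.
by rewrite ptr1_tens_conj (sqrtm_povm x).2.
Qed.

Lemma dilation_kraus x : instrument I -> I x =1 kraus (slice1 (V x)).
Proof.
move=> instrI; apply: eq_linear_map_states => [||rho st]; first exact: (instrI.1 x).1.
  exact: kraus_linear.
by rewrite dilation_ptr1 // ptr1_conj.
Qed.

Lemma sum_adj_branch : \sum_x adj (V x) *m V x = 1%:M.
Proof.
have [isoW [[_ sumE] _]] := dilIWE.
under eq_bigr do rewrite adjM adj_sqrtm_tens1 mulmxA -(mulmxA _ _ (_ *t _)) tensmx_mul
  (sqrtm_povm _).2 mulmx1.
rewrite -mulmx_suml -mulmx_sumr tensmx_suml sumE tensmx11 mulmx1.
exact: isoW.
Qed.

End Dilation.

Lemma postprocessing_compatible (C : numClosedFieldType) (Omega Lambda : finType)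
    (n m p a : nat) (I : Omega -> 'M[C]_n -> 'M[C]_m) (J : Lambda -> 'M[C]_n -> 'M[C]_p)
    (W : 'M[C]_(a * m, n)) (E : Omega -> 'M[C]_a) :
  dilation I W E -> postprocessing J (complementary W E) -> compatible I J.
Proof.
move=> dilIWE [R [instrR JR]].
have [Q QR] := ClassicalEpsilon.choice _ (fun x => instrument_kraus (instrR x)).
pose V := dilation_branch W E.
exists (fun xy => kraus (joint_kraus V Q xy.1 xy.2)); split; [|split].
- apply/kraus_instrument/joint_kraus_sum; last exact: sum_adj_branch dilIWE.
  by move=> x; case: (QR x).
- move=> y rho _; rewrite JR; apply: eq_bigr => x _.
  by rewrite joint_kraus_ptr1 (complementaryE dilIWE); case: (QR x) => ->.
- move=> x rho st; rewrite joint_kraus_ptr2 ?(dilation_ptr1 dilIWE) // => x'.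
  by case: (QR x').
Qed.

Lemma compatible_postprocessing (C : numClosedFieldType) (Omega Lambda : finType)
    (n m p a : nat) (I : Omega -> 'M[C]_n -> 'M[C]_m) (J : Lambda -> 'M[C]_n -> 'M[C]_p)
    (W : 'M[C]_(a * m, n)) (E : Omega -> 'M[C]_a) :
  (0 < n)%N -> instrument I -> instrument J -> dilation I W E ->
  compatible I J -> postprocessing J (complementary W E).
Proof.
move=> n_gt0 instrI instrJ dilIWE [G [instrG [GJ GI]]].
have [K [GK _]] := instrument_kraus instrG.
have /card_gt0P[[y0 v0] _] := instrument_card_gt0 instrJ n_gt0.
pose V := dilation_branch W E.
pose Kx x y := K (x, y).
have margI x : kraus (slice1 (V x)) =1 kraus (fun b => slice2 (Kx x b.1.1 b.1.2) b.2).
  move=> X; rewrite -(dilation_kraus dilIWE) // -sum_ptr2_kraus; move: X.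
  apply: eq_linear_map_states => [||rho st]; first exact: (instrI.1 x).1.
    apply: linear_map_sumf => y.
    exact: linear_map_comp (@ptr2_linear _ _ _) (kraus_linear _).
  by rewrite -GI //; apply: eq_bigr => y _; rewrite GK.
have [T TN] := ClassicalEpsilon.choice _ (fun x => kraus_eq_contraction (margI x)).
have [N KTN] := ClassicalEpsilon.choice _ TN.
exists (fun x y => kraus (post_kraus (T x) (N x) y0 v0 y)); split.
  by move=> x; apply/kraus_instrument/post_kraus_sum; case: (KTN x).
move=> y X; have -> : J y X = \sum_x ptr1 (kraus (Kx x y) X).
  move: X; apply: eq_linear_map_states => [||rho st]; first exact: (instrJ.1 y).1.
    apply: linear_map_sumf => x.
    exact: linear_map_comp (@ptr1_linear _ _ _) (kraus_linear _).
  by rewrite -GJ //; apply: eq_bigr => x _; rewrite GK.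
apply: eq_bigr => x _; rewrite (complementaryE dilIWE) ptr2_conj_gram.
by case: (KTN x) => KT TNx; rewrite (post_kraus_gram y0 v0 TNx (margI x) KT).
Qed.

Theorem proposition7 (C : numClosedFieldType) (Omega Lambda : finType)
  (n m p a : nat) (n_gt0 : (0 < n)%N)
  (I : Omega -> 'M[C]_n -> 'M[C]_m) (J : Lambda -> 'M[C]_n -> 'M[C]_p)
  (W : 'M[C]_(a * m, n)) (E : Omega -> 'M[C]_a) :
  instrument I -> instrument J -> dilation I W E ->
  (compatible I J <-> postprocessing J (complementary W E)).
Proof.
move=> instrI instrJ dilIWE; split.
  exact: compatible_postprocessing.
exact: postprocessing_compatible.
Qed.
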